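(* Let $G$ be a $P_5$-free graph and let $C\subseteq V(G)$ be partitioned into independent sets $C_1,\dots,C_k$ of $G$. Let $D\subseteq C$ be such that $G[D]$ is connected, every vertex of $C$ is in $D$ or has a neighbor in $D$, and $D\cap C_r\neq\emptyset$ for every $r\in\{1,\dots,k\}$. Assume moreover that for every vertex $u\in V(G)\setminus C$ there exists $r\in\{1,\dots,k\}$ such that $u$ has no neighbor in $D\cap C_r$. Let $Y:=V(G)\setminus N[C]$. Then for every connected component $Y'$ of $G[Y]$, the vertex set $V(Y')$ is a module in $G$.
   Context: For $A\subseteq V(G)$, $N(A)$ is the set of vertices outside $A$ with a neighbor in $A$, and $N[A]=A\cup N(A)$. A set $M\subseteq V(G)$ is a module in $G$ if $N(u)\setminus M = N(v)\setminus M$ for all $u,v\in M$. A graph is $P_5$-free if it has no induced path on 5 vertices. *)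

From mathcomp Require Import all_boot.
Set Implicit Arguments. Unset Strict Implicit. Unset Printing Implicit Defensive.

Section Graphs.
Variable T : finType.
Variable e : rel T.

Definition simple_graph := symmetric e /\ irreflexive e.

Definition nbhd (A : {set T}) : {set T} :=
  [set v | (v \notin A) && [exists u in A, e u v]].
Definition cnbhd (A : {set T}) : {set T} := A :|: nbhd A.

Definition induced_rel (A : {set T}) : rel T :=
  [rel x y | [&& x \in A, y \in A & e x y]].

Definition connected_in (A : {set T}) : Prop :=
  A != set0 /\ forall x y, x \in A -> y \in A -> connect (induced_rel A) x y.

Definition component_of (A Y' : {set T}) : Prop :=
  exists2 y0, y0 \in A & Y' = [set y in A | connect (induced_rel A) y0 y].

Definition independent (A : {set T}) : Prop :=
  forall x y, x \in A -> y \in A -> ~~ e x y.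

Definition is_module (M : {set T}) : Prop :=
  forall u v, u \in M -> v \in M -> forall w, w \notin M -> e u w = e v w.

Definition induced_P5 (v : 'I_5 -> T) : Prop :=
  injective v /\
  forall i j : 'I_5, e (v i) (v j) = ((i.+1 == j :> nat) || (j.+1 == i :> nat)).

Definition P5_free : Prop := forall v : 'I_5 -> T, ~ induced_P5 v.

End Graphs.

From mathcomp Require Import all_boot.
Set Implicit Arguments. Unset Strict Implicit. Unset Printing Implicit Defensive.

(* Let a, b be adjacent vertices of Y and let w outside Y be adjacent to a
   but not to b.  Since a lies outside N[C], w is not in C, so w lies in N(C).
   Then w has a neighbour in D (otherwise b-a-w-c-d is an induced P5 for
   suitable c in C, d in D), and a non-neighbour in D (it misses the nonempty
   set D ∩ C_r), so a walk in G[D] yields adjacent x, z in D with w ~ x,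
   w ≁ z, and b-a-w-x-z is an induced P5.  Hence the two ends of an edge of
   G[Y] see the same vertices outside Y, which makes every component of G[Y]
   a module. *)

Section P5.
Variables (T : finType) (e : rel T).
Hypotheses (e_sym : symmetric e) (e_irr : irreflexive e) (e_P5_free : P5_free e).

Lemma no_induced_path5 v0 v1 v2 v3 v4 :
  e v0 v1 -> e v1 v2 -> e v2 v3 -> e v3 v4 ->
  ~~ e v0 v2 -> ~~ e v0 v3 -> ~~ e v0 v4 -> ~~ e v1 v3 -> ~~ e v1 v4 -> ~~ e v2 v4 ->
  False.
Proof.
move=> e01 e12 e23 e34 n02 n03 n04 n13 n14 n24.
pose s := [:: v0; v1; v2; v3; v4].
have s_uniq : uniq s.
  have d02 : v0 != v2 by apply: contraNneq n03 => ->.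
  have d03 : v0 != v3 by apply: contraNneq n02 => ->; rewrite e_sym.
  have d04 : v0 != v4 by apply: contraNneq n03 => ->; rewrite e_sym.
  have d13 : v1 != v3 by apply: contraNneq n14 => ->.
  have d14 : v1 != v4 by apply: contraNneq n13 => ->; rewrite e_sym.
  have d24 : v2 != v4 by apply: contraNneq n14 => <-.
  have neq_edge x y : e x y -> x != y by apply: contraTneq => ->; rewrite e_irr.
  by rewrite /= !inE !negb_or d02 d03 d04 d13 d14 d24 !neq_edge.
apply: (e_P5_free (v := fun i : 'I_5 => nth v0 s i)); split=> [i j /eqP|i j].
  by rewrite nth_uniq // => /eqP/val_inj.
wlog le_ij : i j / i <= j.
  by move=> wlog_ij; case: (leqP i j) => [|/ltnW] /wlog_ij //; rewrite e_sym orbC.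
case: i j le_ij => [[|[|[|[|[|//]]]]] ?] [[|[|[|[|[|//]]]]] ?] //= _;
  by rewrite ?e_irr ?(negbTE n02) ?(negbTE n03) ?(negbTE n04)
             ?(negbTE n13) ?(negbTE n14) ?(negbTE n24).
Qed.
End P5.

Lemma connect_boundary_edge (T : finType) (r : rel T) (P : pred T) x y :
  connect r x y -> P x -> ~~ P y -> exists a b, [/\ r a b, P a & ~~ P b].
Proof.
move=> /connectP[p]; elim: p x => [|z p IHp] x /=; first by move=> _ -> ->.
case/andP=> rxz rp yl Px nPy; case Pz: (P z); first exact: IHp rp yl Pz nPy.
by exists x, z; rewrite Pz.
Qed.

Section Neighbourhoods.
Variables (T : finType) (e : rel T).

Lemma notin_cnbhdP (A : {set T}) a :
  reflect (a \notin A /\ {in A, forall c, ~~ e c a}) (a \notin cnbhd e A).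
Proof.
rewrite !inE negb_or negb_and negbK negb_exists_in.
case: (boolP (a \in A)) => aA /=; first by constructor; case.
by apply: (iffP forall_inP) => [|[]].
Qed.

Lemma component_module (A Y' : {set T}) :
  (forall a b w, a \in A -> b \in A -> w \notin A -> e a b -> e a w = e b w) ->
  component_of e A Y' -> is_module e Y'.
Proof.
move=> edge_uniform [y0 _ ->] u v /setIdP[uA y0u] /setIdP[vA y0v] w.
rewrite inE negb_and; case: (boolP (w \in A)) => wA /= => [y0w|_].
  have nbr_false x : connect (induced_rel e A) y0 x -> x \in A -> e x w = false.
    move=> y0x xA; apply: contraNF y0w => exw.
    by apply: connect_trans y0x (connect1 _); rewrite /induced_rel /= xA wA.
  by rewrite !nbr_false.
have w_nbr_closed : closed (induced_rel e A) [pred x | e x w].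
  by move=> x y /and3P[xA yA exy]; apply: edge_uniform.
have := closed_connect w_nbr_closed y0u; have := closed_connect w_nbr_closed y0v.
by rewrite !inE => <- <-.
Qed.

End Neighbourhoods.

Section Claim.
Variables (T : finType) (e : rel T).
Hypotheses (e_sym : symmetric e) (e_irr : irreflexive e) (e_P5_free : P5_free e).
Variables C D : {set T}.
Hypotheses (sDC : D \subset C) (D_connected : connected_in e D).
Hypothesis C_dominated : C \subset cnbhd e D.
Hypothesis outside_C_misses_D : forall u, u \notin C -> exists2 d, d \in D & ~~ e u d.

Let Y := ~: cnbhd e C.

Lemma Y_nonadj_C a c : a \in Y -> c \in C -> ~~ e a c.
Proof. by rewrite inE => /notin_cnbhdP[_ nadj] cC; rewrite e_sym nadj. Qed.

Lemma no_P5_from_Y_edge a b w x z : a \in Y -> b \in Y -> x \in C -> z \in C ->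
  e a b -> e a w -> ~~ e b w -> e w x -> ~~ e w z -> e x z -> False.
Proof.
move=> aY bY xC zC eab eaw nbw ewx nwz exz.
apply: (no_induced_path5 e_sym e_irr e_P5_free _ eaw ewx exz nbw) => //;
  by [rewrite e_sym | exact: Y_nonadj_C].
Qed.

Lemma Y_edge_nbhd_adj_D a b w : a \in Y -> b \in Y -> e a b -> e a w -> ~~ e b w ->
  w \in nbhd e C -> exists2 d, d \in D & e w d.
Proof.
move=> aY bY eab eaw nbw; rewrite inE => /andP[_ /exists_inP[c cC ecw]].
have := subsetP C_dominated c cC; rewrite !inE => /orP[cD | ].
  by exists c; rewrite // e_sym.
case/andP=> _ /exists_inP[d dD edc]; exists d => //.
apply/negPn/negP => nwd; apply: (no_P5_from_Y_edge aY bY cC _ eab eaw nbw _ nwd);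
  by rewrite ?(subsetP sDC) // e_sym.
Qed.

Lemma Y_edge_nbr a b w : a \in Y -> b \in Y -> w \notin Y ->
  e a b -> e a w -> e b w.
Proof.
move=> aY bY wY eab eaw; apply/negPn/negP => nbw.
have wC : w \notin C by apply: contraL eaw; apply: Y_nonadj_C.
have wNC : w \in nbhd e C by move: wY; rewrite !inE negbK (negbTE wC).
have [d0 d0D ewd0] := Y_edge_nbhd_adj_D aY bY eab eaw nbw wNC.
have [d1 d1D nwd1] := outside_C_misses_D wC.
have [_ D_conn] := D_connected.
have [x [z [/and3P[xD zD exz] ewx nwz]]] :=
  connect_boundary_edge (D_conn _ _ d0D d1D) ewd0 nwd1.
by apply: (no_P5_from_Y_edge aY bY _ _ eab eaw nbw ewx nwz exz); apply: (subsetP sDC).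
Qed.

End Claim.

Theorem claim4p4 (T : finType) (e : rel T) (k : nat)
    (C D : {set T}) (Cs : 'I_k -> {set T}) :
  simple_graph e ->
  P5_free e ->
  C = \bigcup_(r < k) Cs r ->
  (forall r s : 'I_k, r != s -> [disjoint Cs r & Cs s]) ->
  (forall r : 'I_k, independent e (Cs r)) ->
  D \subset C ->
  connected_in e D ->
  C \subset cnbhd e D ->
  (forall r : 'I_k, D :&: Cs r != set0) ->
  (forall u, u \notin C -> exists r : 'I_k, [forall w in D :&: Cs r, ~~ e u w]) ->
  forall Y' : {set T}, component_of e (~: cnbhd e C) Y' -> is_module e Y'.
Proof.
move=> [e_sym e_irr] e_P5_free _ _ _ sDC D_conn C_dom D_meets_Cs misses_some_Cs Y'.
have outside_C_misses_D u : u \notin C -> exists2 d, d \in D & ~~ e u d.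
  case/misses_some_Cs=> r /forall_inP misses; have [d dDCs] := set0Pn _ (D_meets_Cs r).
  by exists d; [case/setIP: dDCs | apply: misses].
have Y_edge_nbr := Y_edge_nbr e_sym e_irr e_P5_free sDC D_conn C_dom outside_C_misses_D.
apply: component_module => a b w aY bY wY eab.
by apply/idP/idP; apply: Y_edge_nbr; rewrite // e_sym.
Qed.
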